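(* Let $\lambda$ be a partition, $A=\mathcal{L}(\lambda)$, and let $i,j\ge1$ be integers with $\lambda[i,j]\neq()$. (1) If $\mathbb{SG}(A[i,j])=0$, then $d(\lambda[i,j])\ge1$ and $\mathbb{SG}(A[i-1,j-1])=0$. (2) If $\mathbb{SG}(A[i,j])=1$ and $d(\lambda[i,j])\ge2$, then $\mathbb{SG}(A[i-1,j-1])=1$. (3) If $\mathbb{SG}(A[i,j])=2$ and $d(\lambda[i,j])\ge3$, then $\mathbb{SG}(A[i-1,j-1])=2$.
   Context: A partition is a finite non-increasing sequence $\lambda=(\lambda_1,\dots,\lambda_r)$ of positive integers; $()$ is the empty partition. Durfee length: $d(\lambda)=\max\{k:\lambda_k\ge k\}$, and $d(())=0$. For non-negative $i,j$, $\lambda[i,j]$ is $(\lambda_{i+1}-j,\dots,\lambda_r-j)$ with all non-positive entries removed. LCTR: positions $\mathcal{L}(\mu)$; if $\mu\neq()$ the two moves go to $\mathcal{L}(\mu[1,0])$ and $\mathcal{L}(\mu[0,1])$; $\mathcal{L}(())$ is terminal. For $A=\mathcal{L}(\lambda)$, $A[i,j]=\mathcal{L}(\lambda[i,j])$. Normal play; $\mathbb{SG}(A)=\operatorname{mex}\{\mathbb{SG}(B):A\to B\}$. *)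

From mathcomp Require Import all_boot.
Set Implicit Arguments. Unset Strict Implicit. Unset Printing Implicit Defensive.

Definition is_partition (lam : seq nat) : bool :=
  all (fun x => 0 < x) lam && sorted geq lam.

(* lam[i,j] = (lam_{i+1} - j, ..., lam_r - j) with non-positive entries removed. *)
Definition shift (lam : seq nat) (i j : nat) : seq nat :=
  [seq x - j | x <- drop i lam & j < x].

(* Durfee length d(lam) = max {k : lam_k >= k} (1-indexed), d(()) = 0. *)
Definition durfee (lam : seq nat) : nat :=
  \max_(1 <= k < (size lam).+1 | k <= nth 0 lam k.-1) k.

Definition mex (s : seq nat) : nat :=
  find (fun k => k \notin s) (iota 0 (size s).+1).

(* Sprague-Grundy value of the LCTR position L(mu), computed with fuel;
   from L(mu), mu <> (), the moves go to L(mu[1,0]) and L(mu[0,1]);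
   L(()) is terminal. *)
Fixpoint sg_fuel (n : nat) (mu : seq nat) : nat :=
  match n with
  | 0 => 0
  | n'.+1 =>
      if mu is [::] then 0
      else mex [:: sg_fuel n' (shift mu 1 0); sg_fuel n' (shift mu 0 1)]
  end.

(* Each move strictly decreases sumn mu + size mu, so this fuel suffices. *)
Definition SG (mu : seq nat) : nat := sg_fuel (sumn mu + size mu).+1 mu.

(* Write g(a,b) for the Sprague-Grundy value of L(lam[a,b]). Since
   lam[a,b][1,0] = lam[a+1,b] and lam[a,b][0,1] = lam[a,b+1], g satisfies
   g(a,b) = mex {g(a+1,b), g(a,b+1)} whenever lam[a,b] is nonempty, and the
   nonempty positions are closed under decreasing a or b.  In such a grid a 0
   at (a+1,b+1) makes both options of (a,b) nonzero, so g(a,b) = 0; a 1 at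
   (a+1,b+1) has an option of value 0, which moves diagonally to an option of
   (a,b), while the 1 itself keeps the other option of (a,b) away from 1; a 2
   is handled in the same way using the first two cases.  The hypothesis
   d(lam[i,j]) >= k is exactly what guarantees that the positions needed,
   lam[i+p, j+q] with p, q < k, are nonempty. *)

From mathcomp Require Import all_boot zify.
Set Implicit Arguments. Unset Strict Implicit.

Lemma mex2E x y : mex [:: x; y] =
  if (x != 0) && (y != 0) then 0 else if (x != 1) && (y != 1) then 1 else 2.
Proof. by case: x => [|[|[|x]]]; case: y => [|[|[|y]]]; rewrite /mex. Qed.

Lemma geq_trans : transitive geq.
Proof. exact: rev_trans leq_trans. Qed.

Lemma sorted_geq_filter_gtn_nil (s : seq nat) x b :
  sorted geq (x :: s) -> x <= b -> [seq y <- x :: s | b < y] = [::].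
Proof.
move=> /(order_path_min geq_trans) /allP s_le_x x_le_b.
rewrite -(filter_pred0 (x :: s)); apply: eq_in_filter => y.
rewrite inE => /predU1P[-> | /s_le_x /= y_le_x]; first by rewrite ltnNge x_le_b.
by rewrite ltnNge (leq_trans y_le_x x_le_b).
Qed.

Lemma drop_filter_gtn_sorted (s : seq nat) b c : sorted geq s ->
  drop c [seq x <- s | b < x] = [seq x <- drop c s | b < x].
Proof.
elim: s c => [|x s IHs] c s_sorted //.
have IH := IHs _ (path_sorted s_sorted).
case: (ltnP b x) => [b_lt_x | x_le_b].
  by case: c => [|c] /=; rewrite b_lt_x ?drop0 //; apply: IH.
have := sorted_geq_filter_gtn_nil s_sorted x_le_b.
case: c => [-> //|c] /=; rewrite ltnNge x_le_b /= => s_nil.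
by rewrite -IH s_nil.
Qed.

Lemma filter_map_subn (s : seq nat) b d :
  [seq y - d | y <- [seq x - b | x <- s & b < x] & d < y] =
  [seq x - (b + d) | x <- s & b + d < x].
Proof.
elim: s => //= x s IHs; case: (ltnP b x) => b_x /=.
  have -> : (d < x - b) = (b + d < x) by lia.
  by case: ifP; rewrite /= IHs // subnDA.
by have -> : (b + d < x) = false by lia.
Qed.

Lemma shift_shift (lam : seq nat) a b c d : sorted geq lam ->
  shift (shift lam a b) c d = shift lam (c + a) (d + b).
Proof.
move=> lam_sorted; rewrite /shift -map_drop drop_filter_gtn_sorted.
  by rewrite drop_drop filter_map_subn addnC.
exact: drop_sorted.
Qed.

Lemma shift_neq_nilE (lam : seq nat) a b : sorted geq lam ->
  (shift lam a b != [::]) = (b < nth 0 lam a).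
Proof.
move=> lam_sorted; rewrite /shift -[a in nth _ _ a]addn0 -nth_drop.
have := drop_sorted a lam_sorted.
case: (drop a lam) => [|x s] //= s_sorted.
case: (ltnP b x) => // x_le_b.
have := sorted_geq_filter_gtn_nil s_sorted x_le_b.
by rewrite /= ltnNge x_le_b /= => ->.
Qed.

Lemma shift_sorted (lam : seq nat) a b :
  sorted geq lam -> sorted geq (shift lam a b).
Proof.
move=> lam_sorted; apply: (homo_sorted (fun x y => @leq_sub2r b y x)).
exact: (sorted_filter geq_trans _ (drop_sorted a lam_sorted)).
Qed.

Lemma sorted_geq_nth (p : seq nat) i j : sorted geq p -> i <= j ->
  nth 0 p j <= nth 0 p i.
Proof.
move=> p_sorted i_le_j; case: (ltnP j (size p)) => [j_lt | j_ge]; last first.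
  by rewrite nth_default.
apply: (sorted_leq_nth geq_trans leqnn) => //; rewrite inE.
exact: leq_ltn_trans i_le_j j_lt.
Qed.

Lemma durfee_geqE (p : seq nat) k : sorted geq p -> 0 < k ->
  (k <= durfee p) = (k <= nth 0 p k.-1).
Proof.
move=> p_sorted k_gt0; apply/idP/idP => [k_le_d | k_le_nth]; last first.
  apply: (leq_bigmax_seq (F := id)) => //; rewrite mem_index_iota k_gt0 ltnS.
  case: (ltnP k.-1 (size p)) => [|size_le]; first by rewrite prednK.
  by move: k_le_nth; rewrite nth_default // leqn0 => /eqP k0; rewrite k0 in k_gt0.
rewrite leqNgt; apply/negP => nth_lt_k.
suff : durfee p <= k.-1 by lia.
apply/bigmax_leqP_seq => l; rewrite mem_index_iota => /andP[l_gt0 _] l_le_nth.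
rewrite leqNgt; apply/negP => k_le_l.
have /(sorted_geq_nth p_sorted) : k.-1 <= l.-1 by lia.
lia.
Qed.

Lemma shift_neq_nil_durfee (p : seq nat) k a b : sorted geq p ->
  k <= durfee p -> a < k -> b < k -> shift p a b != [::].
Proof.
move=> p_sorted k_le_d a_lt_k b_lt_k.
have k_gt0 : 0 < k by apply: leq_ltn_trans a_lt_k.
move: k_le_d; rewrite durfee_geqE // shift_neq_nilE // => k_le_nth.
have /(sorted_geq_nth p_sorted) : a <= k.-1 by lia.
lia.
Qed.

Definition weight (mu : seq nat) : nat := sumn mu + size mu.

Lemma weight_shift_le mu a b : weight (shift mu a b) <= weight mu.
Proof.
rewrite /shift /weight; elim: mu a => [|x mu IHmu] [|a] //=.
- have := IHmu 0; rewrite drop0 /=; case: ifP => /= _; lia.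
- have := IHmu a; lia.
Qed.

Lemma weight_shift0S_le mu b : weight (shift mu 0 b.+1) <= sumn mu.
Proof.
rewrite /shift /weight drop0.
by elim: mu => //= x mu; case: ifP => /= b_lt_x; lia.
Qed.

Lemma weight_shift10_lt mu : mu != [::] -> weight (shift mu 1 0) < weight mu.
Proof.
case: mu => // x mu _; have -> : shift (x :: mu) 1 0 = shift mu 0 0 by [].
have := weight_shift_le mu 0 0; rewrite /weight /=; lia.
Qed.

Lemma weight_shift01_lt mu : mu != [::] -> weight (shift mu 0 1) < weight mu.
Proof.
case: mu => // x mu _; have := weight_shift0S_le (x :: mu) 0.
rewrite /weight /=; lia.
Qed.

Lemma sg_fuel_stable n n' mu : weight mu < n -> weight mu < n' ->
  sg_fuel n mu = sg_fuel n' mu.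
Proof.
elim: n n' mu => [|n IHn] [|n'] [|x s] //= mu_lt_n mu_lt_n'.
have /weight_shift10_lt w10 : x :: s != [::] by [].
have /weight_shift01_lt w01 : x :: s != [::] by [].
by rewrite (IHn n') ?(IHn n' (shift _ 0 1)) //; lia.
Qed.

Lemma sg_fuelE n mu : weight mu < n -> sg_fuel n mu = SG mu.
Proof. by move=> mu_lt_n; apply: sg_fuel_stable. Qed.

Lemma SG_mex mu : mu != [::] ->
  SG mu = mex [:: SG (shift mu 1 0); SG (shift mu 0 1)].
Proof.
move=> mu_neq_nil; rewrite {1}/SG -/(weight mu).
case: mu mu_neq_nil => // x s mu_neq_nil.
by rewrite [LHS]/= !sg_fuelE ?weight_shift10_lt ?weight_shift01_lt.
Qed.

Section GridGame.

Variables (live : nat -> nat -> bool) (g : nat -> nat -> nat).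
Hypothesis live_down_row : forall a b, live a.+1 b -> live a b.
Hypothesis live_down_col : forall a b, live a b.+1 -> live a b.
Hypothesis g_mex : forall a b, live a b -> g a b = mex [:: g a.+1 b; g a b.+1].

Lemma grid_sg_diag0 a b : live a.+1 b.+1 -> g a.+1 b.+1 = 0 -> g a b = 0.
Proof.
move=> live11 g11.
have live10 := live_down_col live11; have live01 := live_down_row live11.
rewrite (g_mex (live_down_col live01)) (g_mex live10) (g_mex live01) g11 !mex2E.
by case: (g a.+2 b) => [|[|?]]; case: (g a b.+2) => [|[|?]].
Qed.

Lemma grid_sg_diag1 a b : live a.+2 b.+1 -> live a.+1 b.+2 ->
  g a.+1 b.+1 = 1 -> g a b = 1.
Proof.
move=> live21 live12 g11.
have live11 := live_down_row live21.
have live10 := live_down_col live11; have live01 := live_down_row live11.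
have live00 := live_down_col live01.
have [g21 | g12] : g a.+2 b.+1 = 0 \/ g a.+1 b.+2 = 0.
  move: g11; rewrite (g_mex live11) mex2E.
  by case: (g a.+2 b.+1) => [|?]; case: (g a.+1 b.+2) => [|?]; auto.
- rewrite (g_mex live00) (grid_sg_diag0 live21 g21) (g_mex live01) g11 !mex2E.
  by case: (g a b.+2) => [|[|?]].
- rewrite (g_mex live00) (grid_sg_diag0 live12 g12) (g_mex live10) g11 !mex2E.
  by case: (g a.+2 b) => [|[|?]].
Qed.

Lemma grid_sg_diag2 a b : live a.+3 b.+1 -> live a.+2 b.+2 -> live a.+1 b.+3 ->
  g a.+1 b.+1 = 2 -> g a b = 2.
Proof.
move=> live31 live22 live13 g11.
have live21 := live_down_row live31; have live12 := live_down_col live13.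
have live11 := live_down_row live21.
have live00 := live_down_col (live_down_row live11).
have [[g21 g12] | [g21 g12]] :
    g a.+2 b.+1 = 0 /\ g a.+1 b.+2 = 1 \/ g a.+2 b.+1 = 1 /\ g a.+1 b.+2 = 0.
  move: g11; rewrite (g_mex live11) mex2E.
  by case: (g a.+2 b.+1) => [|[|?]]; case: (g a.+1 b.+2) => [|[|?]]; auto.
- rewrite (g_mex live00) (grid_sg_diag0 live21 g21).
  by rewrite (grid_sg_diag1 live22 live13 g12).
- rewrite (g_mex live00) (grid_sg_diag1 live31 live22 g21).
  by rewrite (grid_sg_diag0 live12 g12).
Qed.

End GridGame.

Theorem mainTheorem10 (lam : seq nat) (i j : nat) :
  is_partition lam -> 1 <= i -> 1 <= j -> shift lam i j != [::] ->
  [/\ (SG (shift lam i j) = 0 ->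
         1 <= durfee (shift lam i j) /\ SG (shift lam i.-1 j.-1) = 0),
      (SG (shift lam i j) = 1 -> 2 <= durfee (shift lam i j) ->
         SG (shift lam i.-1 j.-1) = 1)
    & (SG (shift lam i j) = 2 -> 3 <= durfee (shift lam i j) ->
         SG (shift lam i.-1 j.-1) = 2)].
Proof.
case/andP => _ lam_sorted; case: i => // a _; case: j => // b _ live11 /=.
pose live p q := shift lam p q != [::].
pose g p q := SG (shift lam p q).
have live_down_row p q : live p.+1 q -> live p q.
  rewrite /live !shift_neq_nilE // => /leq_trans; apply.
  exact: sorted_geq_nth lam_sorted (leqnSn p).
have live_down_col p q : live p q.+1 -> live p q.
  by rewrite /live !shift_neq_nilE // => /ltnW.
have g_mex p q : live p q -> g p q = mex [:: g p.+1 q; g p q.+1].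
  by move=> live_pq; rewrite /g SG_mex // !shift_shift.
have mu_sorted : sorted geq (shift lam a.+1 b.+1) by exact: shift_sorted.
have live_durfee k p q : k <= durfee (shift lam a.+1 b.+1) -> p < k -> q < k ->
    live (p + a.+1) (q + b.+1).
  by rewrite /live -shift_shift //; apply: shift_neq_nil_durfee.
split.
- move=> g11; split.
    by rewrite durfee_geqE // -shift_neq_nilE // shift_shift.
  exact: grid_sg_diag0 live_down_row live_down_col g_mex _ _ live11 g11.
- move=> g11 d2.
  exact: grid_sg_diag1 live_down_row live_down_col g_mex _ _
    (live_durfee 2 1 0 d2 _ _) (live_durfee 2 0 1 d2 _ _) g11.
- move=> g11 d3.
  exact: grid_sg_diag2 live_down_row live_down_col g_mex _ _
    (live_durfee 3 2 0 d3 _ _) (live_durfee 3 1 1 d3 _ _)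
    (live_durfee 3 0 2 d3 _ _) g11.
Qed.
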